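(* Let $d\ge 3$, let $\Delta$ be a shellable simplicial $(d-1)$-sphere, and let $G$ be its facet-ridge graph. Then $G$ has a good acyclic orientation.
   Context: $\Delta$ is a simplicial complex whose geometric realization is homeomorphic to the $(d-1)$-sphere; its facets are its maximal faces ($d$ elements each), and ridges are faces with $d-1$ elements. The facet-ridge graph $G$ has the facets as vertices, two facets adjacent iff they share a ridge. Shelling: a total ordering $T_1,\dots,T_n$ of the facets such that for each $2\le i\le n$, $\overline{T}_i\cap(\overline{T}_1\cup\cdots\cup\overline{T}_{i-1})$ is pure $(d-2)$-dimensional, where $\overline{T}$ is the set of all subsets of $T$; $\Delta$ is shellable if a shelling exists. For $0\le k\le d$ and a face $\sigma$ of dimension $d-k-1$ (i.e., $|\sigma|=d-k$; the empty face has dimension $-1$), let $\mathcal{V}^\Delta_k(\sigma)$ be the set of vertices of $G$ corresponding to facets of $\Delta$ containing $\sigma$, and $G[W]$ the induced subgraph on $W$. An orientation $\mathcal{O}$ of $G$ is good if for every $0\le k\le d$ and every $(d-k-1)$-dimensional face $\sigma$, the orientation induced by $\mathcal{O}$ on $G[\mathcal{V}^\Delta_k(\sigma)]$ has exactly one sink (vertex with no outgoing edge within that subgraph). It is acyclic if it has no directed cycle. *)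

From HB Require Import structures.
From mathcomp Require Import all_boot all_order all_algebra.
From mathcomp Require Import reals.
Set Implicit Arguments. Unset Strict Implicit. Unset Printing Implicit Defensive.
Import Order.TTheory GRing.Theory Num.Theory.
Local Open Scope ring_scope.

Section Defs.
Variable V : finType.

Definition simplicial_complex (D : {set {set V}}) : Prop :=
  set0 \in D /\ forall s t : {set V}, s \in D -> t \subset s -> t \in D.

Definition facet (D : {set {set V}}) (F : {set V}) : bool :=
  (F \in D) && [forall G in D, (F \subset G) ==> (G == F)].

Definition fr_adj (d : nat) (D : {set {set V}}) (F F' : {set V}) : bool :=
  [&& facet D F, facet D F', F != F' &
      [exists r : {set V}, [&& r \in D, #|r| == d.-1, r \subset F & r \subset F']]].

(** A family K of sets (a complex) is pure of dimension c-1: every maximal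
    element of K has exactly c elements. *)
Definition pure_card (K : {set {set V}}) (c : nat) : Prop :=
  forall s, s \in K -> (forall t, t \in K -> s \subset t -> t = s) -> #|s| = c.

(** The complex  closure(T_i) ∩ (closure(T_1) ∪ ... ∪ closure(T_{i-1}))
    for the ordering s (0-indexed position i). *)
Definition shell_int (s : seq {set V}) (i : nat) : {set {set V}} :=
  [set sg : {set V} | (sg \subset nth set0 s i) &&
                      has (fun T : {set V} => sg \subset T) (take i s)].

(** A shelling of D (pure of dimension d-1): a total ordering of all facets
    such that each intersection above (for i >= 1, 0-indexed) is pure of
    dimension d-2, i.e. its maximal faces have d-1 elements. *)
Definition shelling (d : nat) (D : {set {set V}}) (s : seq {set V}) : Prop :=
  [/\ uniq s, (forall F, (F \in s) = facet D F) &
      forall i, (0 < i < size s)%N -> pure_card (shell_int s i) d.-1].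

Definition shellable (d : nat) (D : {set {set V}}) : Prop :=
  exists s, shelling d D s.

Variable R : realType.

Definition geom_realization (D : {set {set V}}) : (V -> R) -> Prop :=
  fun x => [/\ forall v, 0 <= x v, \sum_(v : V) x v = 1 &
               [set v | x v != 0] \in D].

Definition sphere (d : nat) : ('I_d -> R) -> Prop :=
  fun y => \sum_(i < d) y i ^+ 2 = 1.

Definition cont_on (I J : finType) (A : (I -> R) -> Prop) (f : (I -> R) -> (J -> R))
  : Prop :=
  forall x, A x -> forall e : R, 0 < e -> exists2 dl : R, 0 < dl &
    forall y, A y -> (forall i, `|x i - y i| < dl) -> forall j, `|f x j - f y j| < e.

Definition homeomorphic (I J : finType) (A : (I -> R) -> Prop) (B : (J -> R) -> Prop)
  : Prop :=
  exists (f : (I -> R) -> (J -> R)) (g : (J -> R) -> (I -> R)),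
    [/\ (forall x, A x -> B (f x)), (forall y, B y -> A (g y)),
        (forall x, A x -> g (f x) = x), (forall y, B y -> f (g y) = y) &
        (cont_on A f /\ cont_on B g)].

Definition simplicial_sphere (d : nat) (D : {set {set V}}) : Prop :=
  simplicial_complex D /\ homeomorphic (geom_realization D) (@sphere d).

End Defs.

Section Orient.
Variable V : finType.

Definition fr_orientation (d : nat) (D : {set {set V}}) (O : rel {set V}) : Prop :=
  (forall F F', O F F' -> fr_adj d D F F') /\
  (forall F F', fr_adj d D F F' -> (O F F' (+) O F' F)).

Definition facets_containing (D : {set {set V}}) (sg : {set V}) : {set {set V}} :=
  [set F | facet D F && (sg \subset F)].

Definition is_sink (O : rel {set V}) (W : {set {set V}}) (F : {set V}) : bool :=
  (F \in W) && [forall F' in W, ~~ O F F'].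

Definition good_orientation (d : nat) (D : {set {set V}}) (O : rel {set V}) : Prop :=
  forall k, (k <= d)%N -> forall sg, sg \in D -> #|sg| = (d - k)%N ->
    exists F, is_sink O (facets_containing D sg) F /\
      forall F', is_sink O (facets_containing D sg) F' -> F' = F.

Definition acyclic_orientation (O : rel {set V}) : Prop :=
  forall F G, O F G -> ~~ connect O G F.

End Orient.

From mathcomp Require Import all_boot all_order all_algebra reals.
Set Implicit Arguments. Unset Strict Implicit. Unset Printing Implicit Defensive.

(* Orient every edge of the facet-ridge graph from the later to the earlier
   facet of a shelling. The position in the shelling strictly decreases along
   edges, so the orientation is acyclic. For a face sg, the first facet
   containing sg is a sink among the facets containing sg. Any later facet F
   containing sg meets the union of the earlier facets in a pure complex of
   dimension d-2 containing sg, so some ridge through sg is shared by F and an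
   earlier facet: F has an out-edge inside the facets containing sg, hence is
   not a sink. *)

Lemma facet_maxset (V : finType) (D : {set {set V}}) (F : {set V}) :
  facet D F = maxset (mem D) F.
Proof.
apply/andP/maxsetP => [[FD /forall_inP Fmax] | [FD Fmax]]; split=> //.
  by move=> G GD FG; apply/eqP; move/implyP: (Fmax G GD); apply.
by apply/forall_inP=> G GD; apply/implyP=> FG; rewrite (Fmax G).
Qed.

Lemma fr_adj_sym (V : finType) (d : nat) (D : {set {set V}}) :
  symmetric (fr_adj d D).
Proof.
suff adjC F F' : fr_adj d D F F' -> fr_adj d D F' F by move=> F F'; apply/idP/idP=> /adjC.
case/and4P=> fF fF' neqFF' /existsP[r /and4P[rD r_card rF rF']].
by rewrite /fr_adj fF fF' eq_sym neqFF'; apply/existsP; exists r; rewrite rD r_card rF rF'.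
Qed.

Lemma acyclic_of_decreasing (V : finType) (O : rel {set V}) (f : {set V} -> nat) :
  (forall F F', O F F' -> f F' < f F) -> acyclic_orientation O.
Proof.
move=> Odec F G /Odec ltGF; apply/negP=> /connectP[p Gp Flast].
suff : f (last G p) <= f G by rewrite -Flast leqNgt ltGF.
elim: p G Gp {ltGF Flast} => //= H p IHp G /andP[/Odec ltHG Hp].
exact: leq_trans (IHp H Hp) (ltnW ltHG).
Qed.

Lemma unique_sink_of_descent (V : finType) (O : rel {set V}) (f : {set V} -> nat)
    (W : {set {set V}}) (F0 : {set V}) :
  {in W &, injective f} -> (forall F F', O F F' -> f F' < f F) ->
  (forall F G, F \in W -> G \in W -> f G < f F -> exists2 F', F' \in W & O F F') ->
  F0 \in W ->
  exists F, is_sink O W F /\ forall F', is_sink O W F' -> F' = F.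
Proof.
move=> f_inj Odec descent WF0.
case: (arg_minnP f WF0) => F WF Fmin.
exists F; split.
  apply/andP; split=> //; apply/forall_inP=> F' WF'.
  by apply/negP=> /Odec; rewrite ltnNge Fmin.
move=> F' /andP[WF' /forall_inP F'sink]; apply: f_inj => //.
apply/eqP; rewrite eqn_leq Fmin // andbT leqNgt; apply/negP=> ltFF'.
by have [G WG /(negP (F'sink G WG))] := descent F' F WF' WF ltFF'.
Qed.

Section ShellingOrientation.

Variables (V : finType) (d : nat) (D : {set {set V}}) (s : seq {set V}).
Hypothesis D_down : forall sg tau : {set V}, sg \in D -> tau \subset sg -> tau \in D.
Hypothesis s_shelling : shelling d D s.

Definition shelling_orientation : rel {set V} :=
  [rel F F' | fr_adj d D F F' && (index F' s < index F s)].

Local Notation O := shelling_orientation.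

Lemma mem_shelling (F : {set V}) : (F \in s) = facet D F.
Proof. by case: s_shelling. Qed.

Lemma index_shelling_inj : {in facet D &, injective (index^~ s)}.
Proof. by move=> F F' fF fF'; apply: (index_inj set0); rewrite mem_shelling. Qed.

Lemma shelling_orientation_decreasing (F F' : {set V}) : O F F' -> index F' s < index F s.
Proof. by case/andP. Qed.

Lemma fr_orientation_shelling : fr_orientation d D O.
Proof.
split=> [F F' /andP[] // | F F' adj].
have /and4P[fF fF' neqFF' _] := adj.
rewrite /shelling_orientation /= adj -fr_adj_sym adj /=.
case: ltngtP => // /esym/index_shelling_inj eqFF'.
by rewrite eqFF' ?eqxx in neqFF'.
Qed.

Lemma shelling_descent (F T sg : {set V}) :
  facet D F -> facet D T -> sg \subset F -> sg \subset T -> index T s < index F s ->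
  exists2 T' : {set V}, sg \subset T' & O F T'.
Proof.
move=> fF fT sgF sgT ltTF.
have [_ _ pure_shell] := s_shelling.
set i := index F s.
have nthF : nth set0 s i = F by rewrite nth_index ?mem_shelling.
have i_range : (0 < i < size s)%N.
  by rewrite index_mem mem_shelling fF andbT (leq_ltn_trans _ ltTF).
have sg_shell : sg \in shell_int s i.
  by rewrite /shell_int inE nthF sgF; apply/hasP; exists T; rewrite // in_take ?mem_shelling.
have [r /maxsetP[r_shell r_max] sgr] := maxset_exists sg_shell.
have r_card := pure_shell i i_range r r_shell r_max.
have : r \in shell_int s i := r_shell.
rewrite /shell_int inE nthF => /andP[rF /hasP[T' T'_take rT']].
have T's : T' \in s := mem_take T'_take.
have ltT'F : index T' s < i by rewrite -in_take.
exists T'; first exact: subset_trans sgr rT'.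
rewrite /shelling_orientation /= ltT'F andbT /fr_adj fF -mem_shelling T's /=.
apply/andP; split; first by apply: contraTneq ltT'F => <-; rewrite ltnn.
apply/existsP; exists r; rewrite r_card eqxx rF rT' !andbT.
by case/andP: fF => FD _; exact: D_down FD rF.
Qed.

Lemma good_orientation_shelling : good_orientation d D O.
Proof.
move=> k _ sg sgD _.
have [F0 F0max sgF0] := maxset_exists sgD.
apply: (@unique_sink_of_descent _ _ (index^~ s) _ F0).
- by move=> F F'; rewrite !inE => /andP[fF _] /andP[fF' _]; apply: index_shelling_inj.
- exact: shelling_orientation_decreasing.
- move=> F T; rewrite !inE => /andP[fF sgF] /andP[fT sgT] ltTF.
  have [T' sgT' OFT'] := shelling_descent fF fT sgF sgT ltTF.
  by exists T' => //; rewrite inE sgT' andbT; case/and4P: (proj1 (andP OFT')) => _ ->.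
- by rewrite inE facet_maxset F0max.
Qed.

Lemma acyclic_shelling_orientation : acyclic_orientation O.
Proof. exact: acyclic_of_decreasing shelling_orientation_decreasing. Qed.

End ShellingOrientation.

Theorem proposition3p1 (R : realType) (V : finType) (d : nat)
  (D : {set {set V}}) :
  (3 <= d)%N ->
  simplicial_sphere R d D ->
  shellable d D ->
  exists O : rel {set V},
    [/\ fr_orientation d D O, good_orientation d D O & acyclic_orientation O].
Proof.
move=> _ [[_ D_down] _] [s s_shelling].
exists (shelling_orientation d D s); split.
- exact: fr_orientation_shelling.
- exact: good_orientation_shelling.
- exact: acyclic_shelling_orientation.
Qed.
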